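(* Let $\Bbbk$ be algebraically closed, $T$ a torus acting linearly on a finite-dimensional $\Bbbk$-vector space $V$, $X\subseteq\mathbb PV$ a closed $T$-invariant subscheme with $X^T$ finite, and $S:\mathbb G_m\to T$ with $X^S=X^T$. If $X=\bigcup_iX_i$ is the decomposition into irreducible components, then $\Delta(X,S)=\bigcup_i\Delta(X_i,S)$.
   Context: For a closed $S$-invariant $Z\subseteq\mathbb PV$ with finitely many fixed points and $f\in Z^S$, $Z_f=\{z\in Z:\lim_{t\to0}S(t)z=f\}$ is the B-B stratum; $\overline{Z_\emptyset}=Z$, $\overline{Z_{f_0,\ldots,f_k}}=\overline{\overline{Z_{f_0,\ldots,f_{k-1}}}\cap Z_{f_k}}$. A closure chain of $Z$ is a nonrepeating $(f_0,\ldots,f_k)$ in $Z^S$ with $\overline{Z_{f_0,\ldots,f_k}}\ne\emptyset$, and $\Delta(Z,S)$ is the simplicial complex of closure chains regarded as subsets of $Z^S$. *)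

From HB Require Import structures.
From mathcomp Require Import all_boot all_order all_algebra.
From mathcomp Require Import mpoly.
Set Implicit Arguments. Unset Strict Implicit. Unset Printing Implicit Defensive.
Import Order.TTheory GRing.Theory Num.Theory.
Local Open Scope ring_scope.

(* V = k^n (row vectors), PV = P^{n-1}; a point of PV is represented by its
   unique normalized representative: nonzero, first nonzero coordinate = 1. *)
Section Proj.
Variables (k : closedFieldType) (n : nat).

Definition pnorm (v : 'rV[k]_n) : 'rV[k]_n :=
  if [pick i | v 0 i != 0] is Some i then (v 0 i)^-1 *: v else v.

Definition proj := {v : 'rV[k]_n | (v != 0) && (pnorm v == v)}.

Definition rep (v : 'rV[k]_n) (x : proj) : Prop := v != 0 /\ pnorm v = val x.

Definition pset := proj -> Prop.
Definition psub (A B : pset) := forall x, A x -> B x.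

Definition homogeneous (p : {mpoly k[n]}) : Prop :=
  exists d, all (fun m => mdeg m == d) (msupp p).

Definition pclosed (Z : pset) : Prop :=
  exists F : {mpoly k[n]} -> Prop,
    (forall p, F p -> homogeneous p) /\
    forall x : proj, Z x <-> (forall p, F p -> p.@[fun i => val x 0 i] = 0).

Definition pclosure (Z : pset) : pset :=
  fun x => forall C, pclosed C -> psub Z C -> C x.

Definition irreducible (Z : pset) : Prop :=
  [/\ pclosed Z, exists x, Z x &
      forall A B, pclosed A -> pclosed B -> psub Z (fun x => A x \/ B x) ->
        psub Z A \/ psub Z B].

Definition irr_component (Y X : pset) : Prop :=
  [/\ irreducible Y, psub Y X &
      forall Y', irreducible Y' -> psub Y Y' -> psub Y' X -> psub Y' Y].

(* Linear action of the torus T = G_m^r on V: diagonalizable with weights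
   w i : Z^r in the basis given by the rows of an invertible matrix P. *)
Variables (r : nat) (w : 'I_n -> 'I_r -> int) (P : 'M[k]_n).

Definition torus_elt (t : 'I_r -> k) : Prop := forall j, t j != 0.

Definition rho (t : 'I_r -> k) : 'M[k]_n :=
  invmx P *m diag_mx (\row_i \prod_(j < r) t j ^ w i j) *m P.

Definition T_invariant (Z : pset) : Prop :=
  forall t x y, torus_elt t -> Z x -> rep (val x *m rho t) y -> Z y.

Definition T_fixed (Z : pset) : pset :=
  fun x => Z x /\ forall t, torus_elt t -> rep (val x *m rho t) x.

(* one-parameter subgroup S : G_m -> T given by a cocharacter s : Z^r *)
Variable (s : 'I_r -> int).

Definition rhoS (c : k) : 'M[k]_n := rho (fun j => c ^ s j).

Definition S_fixed (Z : pset) : pset :=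
  fun x => Z x /\ forall c : k, c != 0 -> rep (val x *m rhoS c) x.

(* lim_{t -> 0} S(t) z = f : the orbit map G_m -> PV, t |-> S(t) z, extends
   to A^1 (given by a polynomial vector q with q(0) != 0) and sends 0 to f. *)
Definition lim0 (z f : proj) : Prop :=
  exists q : 'I_n -> {poly k},
    rep (\row_i (q i).[0]) f /\
    forall c : k, c != 0 ->
      exists a : k, a != 0 /\ \row_i (q i).[c] = a *: (val z *m rhoS c).

Definition BBstratum (Z : pset) (f : proj) : pset :=
  fun z => Z z /\ lim0 z f.

(* closure of Z_{f_0,...,f_k}:  Z for the empty chain, and
   closure (closure(Z_{f_0..f_{k-1}}) /\ Z_{f_k}) recursively *)
Definition chain_closure (Z : pset) (fs : seq proj) : pset :=
  foldl (fun C f => pclosure (fun z => C z /\ BBstratum Z f z)) Z fs.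

Definition closure_chain (Z : pset) (fs : seq proj) : Prop :=
  [/\ fs != [::], uniq fs, (forall f, f \in fs -> S_fixed Z f) &
      exists x, chain_closure Z fs x].

(* faces of Delta(Z,S): subsets of Z^S (given as predicates) that are the
   underlying sets of closure chains *)
Definition Delta (Z : pset) (sigma : pset) : Prop :=
  exists fs, closure_chain Z fs /\ forall x, sigma x <-> x \in fs.

End Proj.

From Pilot Require Import Defs.
From HB Require Import structures.
From mathcomp Require Import all_boot all_order all_algebra zify ring.
From mathcomp Require Import mpoly.
From Stdlib Require Import Classical.
Set Implicit Arguments. Unset Strict Implicit. Unset Printing Implicit Defensive.
Import Order.TTheory GRing.Theory Num.Theory.
Local Open Scope ring_scope.

(* Closures of strata and finite unions commute: the stratum X_f is the union
   of the strata (X_i)_f, and the closure of a finite union is the union of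
   the closures, so by induction on the chain every chain closure of X is the
   union of the corresponding chain closures of the components.  What remains
   is that the fixed points of a chain of X_i lie in X_i, which holds because
   each component is S-invariant and closed, hence contains the limits of its
   points.  S-invariance of X_i: the S-orbit of a point of X_i meets some
   component X_j in infinitely many points; as a polynomial in c vanishing at
   infinitely many c vanishes identically, the whole orbit lies in X_j.  The
   points whose orbit lies in X_j form a closed set, so irreducibility puts
   X_i inside one of them, and maximality of X_i forces its orbits back into
   X_i. *)

Lemma finite_cover_infinite (I : finType) (T : eqType) (D : T -> Prop)
    (Q : I -> T -> Prop) :
  (forall l : seq T, exists c, c \notin l /\ D c) ->
  (forall c, D c -> exists j, Q j c) ->
  exists j, forall l : seq T, exists c, [/\ c \notin l, D c & Q j c].
Proof.
move=> Dinf DQ; apply: NNPP => none.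
have fin_bad (J : seq I) : exists L : seq T,
    forall j, j \in J -> forall c, c \notin L -> D c -> ~ Q j c.
  elim: J => [|j J [L HL]]; first by exists [::].
  have [l hl] : exists l : seq T, ~ exists c, [/\ c \notin l, D c & Q j c].
    by apply: not_all_ex_not => hj; apply: none; exists j.
  exists (l ++ L) => j'; rewrite inE => j'J c.
  rewrite mem_cat negb_or => /andP [cl cL] Dc Qc.
  case/orP: j'J => [/eqP ej|j'J]; last exact: HL j'J c cL Dc Qc.
  by apply: hl; exists c; rewrite -ej.
have [L HL] := fin_bad (enum I).
have [c [cL Dc]] := Dinf L; have [j Qj] := DQ c Dc.
exact: HL j (mem_enum _ _) c cL Dc Qj.
Qed.

Section Projective.
Variables (k : closedFieldType) (n : nat).
Implicit Types (v : 'rV[k]_n) (x y : proj k n) (p : {mpoly k[n]}).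

Lemma pnorm_scale v : exists2 a : k, a != 0 & pnorm v = a *: v.
Proof.
rewrite /pnorm; case: pickP => [i vi|_]; first by exists (v 0 i)^-1; rewrite ?invr_eq0.
by exists 1; rewrite ?oner_eq0 ?scale1r.
Qed.

Lemma pnormZ a v : a != 0 -> pnorm (a *: v) = pnorm v.
Proof.
move=> a0; rewrite /pnorm.
have -> : [pick i | (a *: v) 0 i != 0] = [pick i | v 0 i != 0].
  by apply: eq_pick => i /=; rewrite mxE mulf_eq0 (negbTE a0).
case: pickP => [i _|v0]; first by rewrite mxE scalerA invfM mulrAC mulVf ?mul1r.
have -> : v = 0 by apply/matrixP => i j; rewrite (ord1 i) mxE; apply/eqP/negbFE/v0.
by rewrite scaler0.
Qed.

Lemma pnorm_neq0 v : v != 0 -> pnorm v != 0.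
Proof. by have [a a0 ->] := pnorm_scale v; rewrite scaler_eq0 negb_or a0. Qed.

Lemma rep_exists v : v != 0 -> exists y, rep v y.
Proof.
move=> v0; have [a a0 va] := pnorm_scale v.
have hv : (pnorm v != 0) && (pnorm (pnorm v) == pnorm v).
  by rewrite pnorm_neq0 //= {1}va pnormZ.
by exists (exist (fun u : 'rV[k]_n => (u != 0) && (pnorm u == u)) _ hv).
Qed.

Lemma proj_neq0 y : val y != 0.
Proof. by case/andP: (valP y). Qed.

Lemma rep_val y : rep (val y) y.
Proof. by case/andP: (valP y) => y0 /eqP. Qed.

Lemma rep_uniq v y1 y2 : rep v y1 -> rep v y2 -> y1 = y2.
Proof. by move=> [_ e1] [_ e2]; apply: val_inj; rewrite -e1 -e2. Qed.

Lemma homogeneousP p : homogeneous p <-> exists d, p \is d.-homog.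
Proof. by split=> -[d hd]; exists d; rewrite ?dhomogE // -dhomogE. Qed.

Lemma meval_dhomogZ p d (a : k) (f : 'I_n -> k) :
  p \is d.-homog -> p.@[fun i => a * f i] = a ^+ d * p.@[f].
Proof.
move=> /dhomogP hp; rewrite !mevalE mulr_sumr; apply: eq_big_seq => m hm.
rewrite [RHS]mulrCA; congr (_ * _).
under eq_bigr do rewrite exprMn.
by rewrite big_split /= prodrXr -mdegE hp.
Qed.

Definition eval_row p v := p.@[fun i => v 0 i].

Lemma eval_rowZ p d a v : p \is d.-homog -> eval_row p (a *: v) = a ^+ d * eval_row p v.
Proof.
by move=> hp; rewrite /eval_row -meval_dhomogZ //; apply: meval_eq => i; rewrite mxE.
Qed.

Lemma eval_rowZ_eq0 p a v : homogeneous p -> a != 0 ->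
  eval_row p (a *: v) = 0 <-> eval_row p v = 0.
Proof.
move=> /homogeneousP [d hp] a0; rewrite (eval_rowZ _ _ hp).
split=> [/eqP|->]; last by rewrite mulr0.
by rewrite mulf_eq0 expf_eq0 (negbTE a0) andbF => /eqP.
Qed.

Definition vanish (F : {mpoly k[n]} -> Prop) v := forall p, F p -> eval_row p v = 0.

Definition zero_locus (F : {mpoly k[n]} -> Prop) (Z : pset k n) : Prop :=
  (forall p, F p -> homogeneous p) /\ forall x, Z x <-> vanish F (val x).

Lemma zero_locus_rep F Z v y : zero_locus F Z -> rep v y -> Z y <-> vanish F v.
Proof.
move=> [hF hZ] [_ ey]; rewrite hZ -ey; have [a a0 ->] := pnorm_scale v.
by split=> H p Fp; apply/(eval_rowZ_eq0 _ (hF _ Fp) a0)/H.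
Qed.

Lemma comp_dhomog p d (lq : n.-tuple {mpoly k[n]}) :
  p \is d.-homog -> (forall i, tnth lq i \is 1.-homog) -> p \mPo lq \is d.-homog.
Proof.
move=> /dhomogP hp hlq; rewrite comp_mpolyE big_seq; apply: rpred_sum => m hm.
apply: rpredZ; rewrite -(hp m hm).
suff: \prod_(i < n) tnth lq i ^+ m i \is (\sum_i m i)%N.-homog by rewrite -mdegE.
apply: (big_ind2 (fun q e => q \is e.-homog)) => [|q1 d1 q2 d2|i _].
- exact: dhomog1.
- exact: dhomogM.
- by have := dhomogMn (m i) (hlq i); rewrite mul1n.
Qed.

Definition lin_subst (M : 'M[k]_n) : n.-tuple {mpoly k[n]} :=
  [tuple \sum_(l < n) M l i *: 'X_l | i < n].

Lemma lin_subst_dhomog M i : tnth (lin_subst M) i \is 1.-homog.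
Proof.
rewrite tnth_mktuple; apply: rpred_sum => l _; apply: rpredZ.
by rewrite dhomogX; apply/eqP/mdeg1.
Qed.

Lemma eval_row_lin_subst p M v :
  eval_row (p \mPo lin_subst M) v = eval_row p (v *m M).
Proof.
rewrite /eval_row comp_mpoly_meval; apply: meval_eq => i.
rewrite tnth_mktuple raddf_sum mxE; apply: eq_bigr => l _.
by rewrite /= mevalZ mevalXU mulrC.
Qed.

Lemma exists_notin_neq0 (l : seq k) : exists c, c \notin l /\ c != 0.
Proof.
have : \prod_(z <- 0 :: l) ('X - z%:P) != 0 :> {poly k}.
  exact/monic_neq0/monic_prod_XsubC.
case/closed_nonrootP => c; rewrite root_prod_XsubC inE negb_or => /andP [c0 cl].
by exists c.
Qed.

Lemma poly_infinite_roots_eq0 (Q : {poly k}) :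
  (forall l : seq k, exists c, c \notin l /\ Q.[c] = 0) -> Q = 0.
Proof.
move=> roots; apply/eqP/negPn/negP => Q0.
have [rs eQ] := closed_field_poly_normal Q.
have [c [/negP crs]] := roots rs; rewrite eQ hornerZ => /eqP.
by rewrite mulf_eq0 lead_coef_eq0 (negbTE Q0) -[_ == 0]/(root _ c) root_prod_XsubC.
Qed.

Lemma meval_horner_poly p (q : 'I_n -> {poly k}) :
  exists Q : {poly k}, forall c, Q.[c] = p.@[fun i => (q i).[c]].
Proof.
exists (\sum_(m <- msupp p) p@_m *: \prod_i q i ^+ m i) => c.
rewrite mevalE horner_sum; apply: eq_bigr => m _.
by rewrite hornerZ horner_prod; congr (_ * _); apply: eq_bigr => i _; rewrite horner_exp.
Qed.

End Projective.

Section Zariski.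
Variables (k : closedFieldType) (n : nat).
Implicit Types (A B C Z : pset k n) (F : {mpoly k[n]} -> Prop).

Lemma pclosed_ext A B : (forall x, A x <-> B x) -> pclosed A -> pclosed B.
Proof. by move=> AB [F [hF hA]]; exists F; split=> // x; rewrite -AB. Qed.

Lemma pclosed0 : pclosed (fun _ : proj k n => False).
Proof.
exists (eq 1); split=> [_ <-|x]; first by apply/homogeneousP; exists 0%N; apply: dhomog1.
by split=> // /(_ 1 erefl); rewrite /eval_row meval1 => /eqP; rewrite oner_eq0.
Qed.

Lemma pclosedU A B : pclosed A -> pclosed B -> pclosed (fun x => A x \/ B x).
Proof.
move=> [FA [hFA hA]] [FB [hFB hB]].
exists (fun p => exists a b, [/\ FA a, FB b & p = a * b]); split.
  move=> _ [a [b [Fa Fb ->]]].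
  have /homogeneousP [da ha] := hFA _ Fa; have /homogeneousP [db hb] := hFB _ Fb.
  by apply/homogeneousP; exists (da + db)%N; apply: dhomogM.
move=> x; rewrite hA hB; split.
  move=> [H|H] _ [a [b [Fa Fb ->]]];
  by rewrite /eval_row mevalM ?(H _ Fa) ?(H _ Fb) ?mul0r ?mulr0.
move=> H; apply: NNPP => /not_or_and [nA nB].
apply: nA => a Fa; apply: NNPP => na; apply: nB => b Fb.
have /eqP := H _ (ex_intro _ a (ex_intro _ b (And3 Fa Fb erefl))).
by rewrite /eval_row mevalM mulf_eq0 => /orP [] /eqP // /na.
Qed.

Lemma pclosed_seqU (J : eqType) (A : J -> pset k n) (l : seq J) :
  (forall j, pclosed (A j)) -> pclosed (fun x => exists j, j \in l /\ A j x).
Proof.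
move=> cA; elim: l => [|j l IH].
  by apply: pclosed_ext pclosed0 => x; split=> // -[j []].
apply: pclosed_ext (pclosedU (cA j) IH) => x; split.
  case=> [Ax|[j' [j'l Ax]]]; first by exists j; rewrite inE eqxx.
  by exists j'; rewrite inE j'l orbT.
by case=> j' []; rewrite inE => /orP [/eqP -> Ax|j'l Ax]; [left | right; exists j'].
Qed.

Lemma pclosed_bigU (J : finType) (A : J -> pset k n) :
  (forall j, pclosed (A j)) -> pclosed (fun x => exists j, A j x).
Proof.
move=> cA; apply: pclosed_ext (pclosed_seqU (enum J) cA) => x.
by split=> [[j [_ Ax]]|[j Ax]]; exists j; rewrite ?mem_enum.
Qed.

Lemma pclosed_vanish_mulmx (J : Type) (D : J -> Prop) (M : J -> 'M[k]_n) F :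
  (forall p, F p -> homogeneous p) ->
  pclosed (fun y => forall j, D j -> vanish F (val y *m M j)).
Proof.
move=> hF; exists (fun p => exists j p0, [/\ D j, F p0 & p = p0 \mPo lin_subst (M j)]).
split=> [_ [j [p0 [_ Fp0 ->]]]|x].
  have /homogeneousP [d hd] := hF _ Fp0.
  by apply/homogeneousP; exists d; apply: comp_dhomog hd (lin_subst_dhomog _).
split=> [H _ [j [p0 [Dj Fp0 ->]]]|H j Dj p0 Fp0].
  by rewrite -[_.@[_]]/(eval_row _ (val x)) eval_row_lin_subst; apply: H.
by rewrite -eval_row_lin_subst; apply: H; exists j, p0.
Qed.

Lemma pclosure_closed A : pclosed (pclosure A).
Proof.
exists (fun p => exists C F, [/\ psub A C, zero_locus F C & F p]).
split=> [p [C [F [_ [hF _] Fp]]]|x]; first exact: hF.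
split=> [H p [C [F [AC [hF hC] Fp]]]|H C [F ZC] AC].
  by apply: (proj1 (hC x)) => //; apply: H => //; exists F.
by apply/(proj2 ZC) => p Fp; apply: H; exists C, F.
Qed.

Lemma sub_pclosure A : psub A (pclosure A).
Proof. by move=> x Ax C _; apply. Qed.

Lemma pclosure_min A C : pclosed C -> psub A C -> psub (pclosure A) C.
Proof. by move=> cC AC x; apply. Qed.

Lemma pclosure_mono A B : psub A B -> psub (pclosure A) (pclosure B).
Proof. by move=> AB x H C cC BC; apply: H => // y /AB /BC. Qed.

Lemma pclosure_ext A B :
  (forall x, A x <-> B x) -> forall x, pclosure A x <-> pclosure B x.
Proof. by move=> AB x; split; apply: pclosure_mono => y /AB. Qed.

Lemma pclosure_nonempty A x : pclosure A x -> exists y, A y.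
Proof.
by move=> H; apply: NNPP => A0; apply: H pclosed0 _ => y Ay; apply: A0; exists y.
Qed.

Lemma pclosure_bigU (J : finType) (A : J -> pset k n) x :
  pclosure (fun y => exists j, A j y) x <-> exists j, pclosure (A j) x.
Proof.
split=> [|[j]]; last by apply: pclosure_mono => y Ay; exists j.
apply: (pclosure_min (C := fun y => exists j, pclosure (A j) y)).
  by apply: pclosed_bigU => j; apply: pclosure_closed.
by move=> y [j Ay]; exists j; apply: sub_pclosure.
Qed.

Lemma irr_component_closed Y Z : irr_component Y Z -> pclosed Y.
Proof. by case=> [[]]. Qed.

Lemma irreducible_bigU (J : finType) (Y : pset k n) (Z : J -> pset k n) :
  irreducible Y -> (forall j, pclosed (Z j)) -> psub Y (fun x => exists j, Z j x) ->
  exists j, psub Y (Z j).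
Proof.
case=> _ [y0 Yy0] irrY cZ.
suff H (l : seq J) :
    psub Y (fun x => exists j, j \in l /\ Z j x) -> exists j, psub Y (Z j).
  by move=> YZ; apply: (H (enum J)) => x /YZ [j Zx]; exists j; rewrite mem_enum.
elim: l => [|j l IH] YZ; first by have [j []] := YZ _ Yy0.
case: (irrY (Z j) _ (cZ j) (pclosed_seqU l cZ)) => [x /YZ [j' []]||]; last 2 first.
- by exists j.
- exact: IH.
by rewrite inE => /orP [/eqP -> Zx|j'l Zx]; [left | right; exists j'].
Qed.

End Zariski.

Section Torus.
Variables (k : closedFieldType) (n r : nat) (w : 'I_n -> 'I_r -> int)
  (P : 'M[k]_n) (s : 'I_r -> int).
Hypothesis P_unit : P \in unitmx.
Local Notation rS := (rhoS w P s).
Implicit Types (Z : pset k n) (F : {mpoly k[n]} -> Prop).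

Lemma rho_unit t : torus_elt t -> rho w P t \in unitmx.
Proof.
move=> t_unit; rewrite !unitmx_mul unitmx_inv P_unit andbT /= unitmxE det_diag unitfE.
rewrite prodf_seq_neq0; apply/allP => i _ /=; rewrite mxE prodf_seq_neq0.
by apply/allP => j _ /=; apply: expfz_neq0; apply: t_unit.
Qed.

Lemma torus_elt_cochar (c : k) : c != 0 -> torus_elt (fun j => c ^ s j).
Proof. by move=> c0 j; apply: expfz_neq0. Qed.

Lemma mulmx_rhoS_neq0 c (v : 'rV[k]_n) : c != 0 -> v != 0 -> v *m rS c != 0.
Proof.
move=> /torus_elt_cochar /rho_unit rS_unit; apply: contraNneq => v0.
by rewrite -(mulmxK rS_unit v) v0 mul0mx.
Qed.

Lemma rhoS1 : rS 1 = 1%:M.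
Proof.
rewrite /rhoS /rho.
have -> : \row_i \prod_(j < r) (1 ^ s j) ^ w i j = const_mx (1 : k).
  by apply/matrixP => a b; rewrite !mxE big1 // => j _; rewrite !exp1rz.
by rewrite diag_const_mx mulmx1 mulVmx.
Qed.

(* The exponents of c in [v *m rS c] are the integers e i below; shifting them
   by M = \sum_i |e i| makes every coordinate a polynomial in c. *)
Lemma rhoS_laurent (v : 'rV[k]_n) : exists (M : nat) (q : 'I_n -> {poly k}),
  forall c, c != 0 -> forall l, (q l).[c] = c ^+ M * (v *m rS c) 0 l.
Proof.
pose e i := \sum_(j < r) s j * w i j.
pose M := (\sum_i absz (e i))%N.
pose N i := absz (M%:Z + e i).
exists M, (fun l => \sum_i ((v *m invmx P) 0 i * P i l) *: 'X^(N i)) => c c0 l.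
have cN i : c ^+ N i = c ^+ M * c ^ e i.
  have eM : (absz (e i) <= M)%N by rewrite /M (bigD1 i) //= leq_addr.
  have NiE : (N i)%:Z = M%:Z + e i by rewrite /N; lia.
  by rewrite -[c ^+ N i]/(c ^ (N i)%:Z) NiE exprzDr ?unitfE.
have ce i : \prod_(j < r) (c ^ s j) ^ w i j = c ^ e i.
  apply: (big_ind2 (fun x y => x = c ^ y)) => [|_ a _ b -> ->|j _].
  - by rewrite expr0z.
  - by rewrite exprzDr ?unitfE.
  - by rewrite exprz_exp.
rewrite /rhoS /rho !mulmxA mxE horner_sum mulr_sumr; apply: eq_bigr => i _.
rewrite hornerZ hornerXn cN mul_mx_diag !mxE ce; ring.
Qed.

Definition moves_into Z (y : proj k n) (c : k) : Prop :=
  forall y', rep (val y *m rS c) y' -> Z y'.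

Definition orbit_in Z (y : proj k n) : Prop := forall c, c != 0 -> moves_into Z y c.

Definition S_invariant Z : Prop := forall y, Z y -> orbit_in Z y.

Lemma T_invariant_S_invariant Z : T_invariant w P Z -> S_invariant Z.
Proof. by move=> TZ y Zy c c0 y'; apply: TZ (torus_elt_cochar c0) Zy. Qed.

Lemma moves_intoP F Z y c : zero_locus F Z -> c != 0 ->
  moves_into Z y c <-> vanish F (val y *m rS c).
Proof.
move=> ZF c0; have [y' ry'] := rep_exists (mulmx_rhoS_neq0 c0 (proj_neq0 y)).
rewrite -(zero_locus_rep ZF ry'); split=> [|Zy' y'' ry'']; first exact.
by rewrite (rep_uniq ry'' ry').
Qed.

(* Up to a power of c, [c |-> p (v *m rS c)] is a polynomial in c. *)
Lemma orbit_vanish F (v : 'rV[k]_n) : (forall p, F p -> homogeneous p) ->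
  (forall l : seq k, exists c, [/\ c \notin l, c != 0 & vanish F (v *m rS c)]) ->
  forall c, c != 0 -> vanish F (v *m rS c).
Proof.
move=> hF inf c c0 p Fp.
have [M [q hq]] := rhoS_laurent v.
have /homogeneousP [d hd] := hF p Fp; have [Q hQ] := meval_horner_poly p q.
have eQ x : x != 0 -> Q.[x] = x ^+ (M * d) * eval_row p (v *m rS x).
  move=> x0; rewrite hQ exprM -(eval_rowZ _ _ hd).
  by apply: meval_eq => i; rewrite mxE hq.
have Q0 : Q = 0.
  apply: poly_infinite_roots_eq0 => l; have [x [xl x0 vx]] := inf l.
  by exists x; rewrite eQ // vx // mulr0.
move/eqP: (eQ c c0); rewrite Q0 horner0 eq_sym mulf_eq0 expf_eq0 (negbTE c0) andbF.
by move/eqP.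
Qed.

Lemma orbit_in_infinite Z y : pclosed Z ->
  (forall l : seq k, exists c, [/\ c \notin l, c != 0 & moves_into Z y c]) ->
  orbit_in Z y.
Proof.
case=> F ZF inf c c0; apply/(moves_intoP _ ZF c0).
apply: (orbit_vanish ZF.1) c0 => l; have [c' [c'l c'0 yc']] := inf l.
by exists c'; split=> //; apply/(moves_intoP _ ZF c'0).
Qed.

Lemma pclosed_orbit_in Z : pclosed Z -> pclosed (orbit_in Z).
Proof.
case=> F ZF; apply: pclosed_ext (pclosed_vanish_mulmx (fun c : k => c != 0) rS ZF.1) => y.
by split=> H c c0; apply/(moves_intoP _ ZF c0); apply: H.
Qed.

Lemma S_invariant_lim0 Z z f : pclosed Z -> S_invariant Z -> Z z -> lim0 w P s z f -> Z f.
Proof.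
case=> F ZF SZ Zz [q [rf hq]]; apply/(zero_locus_rep ZF rf) => p Fp.
have /homogeneousP [d hd] := ZF.1 _ Fp; have [Q hQ] := meval_horner_poly p q.
have eQ c : Q.[c] = eval_row p (\row_i (q i).[c]).
  by rewrite hQ; apply: meval_eq => i; rewrite mxE.
have Q0 : Q = 0.
  apply: poly_infinite_roots_eq0 => l; have [c [cl c0]] := exists_notin_neq0 l.
  exists c; split=> //; rewrite eQ; have [a [_ ->]] := hq c c0.
  by rewrite (eval_rowZ _ _ hd) ((moves_intoP _ ZF c0).1 (SZ _ Zz c c0)) // mulr0.
by rewrite -eQ Q0 horner0.
Qed.

End Torus.

Section Components.
Variables (k : closedFieldType) (n r : nat) (w : 'I_n -> 'I_r -> int)
  (P : 'M[k]_n) (s : 'I_r -> int) (X : pset k n) (I : finType) (Xi : I -> pset k n).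
Hypotheses (P_unit : P \in unitmx) (X_S : S_invariant w P s X)
  (X_cover : forall x, X x <-> exists i, Xi i x).

Lemma orbit_in_component y : (forall i, pclosed (Xi i)) -> X y ->
  exists j, orbit_in w P s (Xi j) y.
Proof.
move=> Xi_closed Xy.
have cover_orbit c : c != 0 -> exists j, moves_into w P s (Xi j) y c.
  move=> c0; have [y' ry'] := rep_exists (mulmx_rhoS_neq0 w s P_unit c0 (proj_neq0 y)).
  have [j Xjy'] := (X_cover y').1 (X_S Xy c0 ry').
  by exists j => y'' ry''; rewrite (rep_uniq ry'' ry').
have [j inf] := finite_cover_infinite (@exists_notin_neq0 k) cover_orbit.
by exists j; apply: orbit_in_infinite.
Qed.

Lemma component_S_invariant i :
  (forall j, irr_component (Xi j) X) -> S_invariant w P s (Xi i).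
Proof.
move=> Xi_comp; have Xi_closed j := irr_component_closed (Xi_comp j).
have [irr_i Xi_sub Xi_max] := Xi_comp i.
have [j orbit_ij] : exists j, psub (Xi i) (orbit_in w P s (Xi j)).
  apply: irreducible_bigU irr_i (fun j => pclosed_orbit_in w s P_unit (Xi_closed j)) _.
  by move=> y /Xi_sub; apply: orbit_in_component.
have sub_ij : psub (Xi i) (Xi j).
  move=> y /orbit_ij /(_ 1 (oner_neq0 _)); apply.
  by rewrite rhoS1 // mulmx1; apply: rep_val.
have [irr_j Xj_sub _] := Xi_comp j.
move=> y /orbit_ij orb c c0 y' ry'.
exact: Xi_max irr_j sub_ij Xj_sub _ (orb c c0 y' ry').
Qed.

End Components.

Section Chains.
Variables (k : closedFieldType) (n r : nat) (w : 'I_n -> 'I_r -> int)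
  (P : 'M[k]_n) (s : 'I_r -> int).
Local Notation chain_closure := (chain_closure w P s).
Implicit Types (Z : pset k n) (fs : seq (proj k n)).

Lemma chain_closure_rcons Z fs f : chain_closure Z (rcons fs f) =
  pclosure (fun z => chain_closure Z fs z /\ BBstratum w P s Z f z).
Proof. by rewrite /Defs.chain_closure foldl_rcons. Qed.

Lemma chain_closure_sub Z fs : pclosed Z -> psub (chain_closure Z fs) Z.
Proof.
move=> cZ; elim/last_ind: fs => [|fs f IH] //; rewrite chain_closure_rcons.
by apply: pclosure_min => // z [/IH].
Qed.

Lemma chain_closure_bigU X (I : finType) (Xi : I -> pset k n) :
  (forall i, pclosed (Xi i)) -> (forall i, psub (Xi i) X) ->
  (forall x, X x <-> exists i, Xi i x) ->
  forall fs x, chain_closure X fs x <-> exists i, chain_closure (Xi i) fs x.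
Proof.
move=> Xi_closed Xi_sub X_cover; elim/last_ind => [|fs f IH] x; first exact: X_cover.
have strataE z : (chain_closure X fs z /\ BBstratum w P s X f z) <->
    exists i, chain_closure (Xi i) fs z /\ BBstratum w P s (Xi i) f z.
  split=> [[/IH [i ci] [_ lim]]|[i [ci [Xiz lim]]]].
    by exists i; split=> //; split=> //; apply: chain_closure_sub ci.
  by split; [apply/IH; exists i | split=> //; apply: Xi_sub Xiz].
rewrite chain_closure_rcons (pclosure_ext strataE) pclosure_bigU.
by split=> -[i ci]; exists i; rewrite chain_closure_rcons in ci *.
Qed.

Lemma chain_closure_fixed Z fs x f : P \in unitmx -> pclosed Z -> S_invariant w P s Z ->
  chain_closure Z fs x -> f \in fs -> Z f.
Proof.
move=> P_unit cZ SZ; elim/last_ind: fs x => [|fs g IH] x //.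
rewrite chain_closure_rcons => /pclosure_nonempty [z [cz [Zz lim]]].
rewrite mem_rcons inE => /orP [/eqP ->|ffs]; last exact: IH cz ffs.
exact: S_invariant_lim0 cZ SZ Zz lim.
Qed.

End Chains.

Unset Implicit Arguments.
Theorem corollary3p1 (k : closedFieldType) (n r : nat)
    (w : 'I_n -> 'I_r -> int) (P : 'M[k]_n) (s : 'I_r -> int)
    (X : pset k n) (I : finType) (Xi : I -> pset k n) :
  P \in unitmx ->
  pclosed X ->
  T_invariant w P X ->
  (exists l : seq (proj k n), forall x, T_fixed w P X x -> x \in l) ->
  (forall x, S_fixed w P s X x <-> T_fixed w P X x) ->
  (forall i, irr_component (Xi i) X) ->
  (forall x, X x <-> exists i, Xi i x) ->
  forall sigma : pset k n,
    Delta w P s X sigma <-> exists i, Delta w P s (Xi i) sigma.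
Proof.
move=> P_unit _ TX _ _ Xi_comp X_cover sigma.
have Xi_closed i : pclosed (Xi i) := irr_component_closed (Xi_comp i).
have Xi_sub i : psub (Xi i) X by case: (Xi_comp i).
have Xi_S i : S_invariant w P s (Xi i).
  exact: component_S_invariant P_unit (T_invariant_S_invariant TX) X_cover i Xi_comp.
have chainE := chain_closure_bigU w P s Xi_closed Xi_sub X_cover.
split=> [[fs [[fs0 fs_uniq fs_fixed [x cx]] sigmaE]]|].
  have [i cxi] := (chainE fs x).1 cx.
  exists i, fs; split=> //; split=> //; last by exists x.
  move=> f ffs; split; last by case: (fs_fixed f ffs).
  exact: chain_closure_fixed P_unit (Xi_closed i) (Xi_S i) cxi ffs.
case=> i [fs [[fs0 fs_uniq fs_fixed [x cx]] sigmaE]].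
exists fs; split=> //; split=> //; last by exists x; apply/chainE; exists i.
by move=> f /fs_fixed [Xif fixed]; split=> //; apply: Xi_sub Xif.
Qed.
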